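(* Let $\bar{A}_{\tau,\sigma}$ have the form $$\bar{A}_{\tau,\sigma}=\alpha_{(0,0)}-\tfrac12\xi_1P_1(\sigma)+\tfrac12\xi_1P_1(\tau)+\sum_{\substack{i+j\ \text{even}\\ i+j>1}}\alpha_{(i,j)}P_i(\tau)P_j(\sigma),$$ with $\xi_1=\frac{1}{2\sqrt3}$ and real $\alpha_{(i,j)}$ (finitely many nonzero, or such that the series converges uniformly on $[0,1]^2$), and let $B_\tau=1$, $C_\tau=\tau$, $\bar{B}_\tau=1-\tau$. Let $(b_i,c_i)_{i=1}^s$ be a quadrature formula on $[0,1]$ with $b_{s+1-i}=b_i$ and $c_{s+1-i}=1-c_i$ for all $i$. Then the $s$-stage RKN method with nodes $c_i$, coefficients $\bar a_{ij}=b_j\bar{A}_{c_i,c_j}$, $\bar b_i=b_i(1-c_i)$ and weights $b_i$ ($i,j=1,\dots,s$) is symmetric.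
   Context: For $q''=f(t,q)$ with smooth $f:\mathbb{R}\times\mathbb{R}^d\to\mathbb{R}^d$, an $s$-stage RKN method with coefficients $(\bar a_{ij},\bar b_i,b_i,c_i)$ and step size $h$ is $$Q_i=q_0+hc_iq'_0+h^2\sum_{j=1}^s\bar a_{ij}f(t_0+c_jh,Q_j),\quad q_1=q_0+hq'_0+h^2\sum_{i=1}^s\bar b_if(t_0+c_ih,Q_i),\quad q'_1=q'_0+h\sum_{i=1}^sb_if(t_0+c_ih,Q_i).$$ A one-step method $\Phi_h$ is symmetric if $\Phi_h=\Phi_{-h}^{-1}$. $P_k$ is the normalized shifted Legendre polynomial: $P_0=1$, $P_k(x)=\frac{\sqrt{2k+1}}{k!}\frac{d^k}{dx^k}[(x^2-x)^k]$, orthonormal in $L^2[0,1]$; e.g. $P_1(x)=\sqrt3(2x-1)$. *)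

From Stdlib Require Import Reals Lra Lia List Factorial.
From Stdlib Require Fin.
Import ListNotations.
Open Scope R_scope.

Fixpoint rsum (n : nat) (g : nat -> R) : R :=
  match n with
  | O => 0
  | S n' => rsum n' g + g n'
  end.

(* ---------- formal real polynomials as ascending coefficient lists ---------- *)
Fixpoint padd (p q : list R) : list R :=
  match p, q with
  | [], _ => q
  | _, [] => p
  | a :: p', b :: q' => (a + b) :: padd p' q'
  end.

Definition pscale (c : R) (p : list R) : list R := map (Rmult c) p.

Fixpoint pmul (p q : list R) : list R :=
  match p with
  | [] => []
  | a :: p' => padd (pscale a q) (0 :: pmul p' q)
  end.

Definition ppow (p : list R) (k : nat) : list R := Nat.iter k (pmul p) [1].

(* derivative of a_n x^n + a_{n+1} x^{n+1} + ... given as list starting at index n *)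
Fixpoint pderiv_aux (n : nat) (p : list R) : list R :=
  match p with
  | [] => []
  | a :: p' => (INR n * a) :: pderiv_aux (S n) p'
  end.

Definition pderiv (p : list R) : list R :=
  match p with
  | [] => []
  | _ :: p' => pderiv_aux 1 p'
  end.

Definition peval (p : list R) (x : R) : R :=
  fold_right (fun a acc => a + x * acc) 0 p.

(* Normalized shifted Legendre polynomial (Rodrigues formula):
   P_k(x) = sqrt(2k+1)/k! * d^k/dx^k [(x^2 - x)^k]. *)
Definition Leg (k : nat) (x : R) : R :=
  sqrt (2 * INR k + 1) / INR (fact k) *
  peval (Nat.iter k pderiv (ppow [0; -1; 1] k)) x.

Definition xi1 : R := / (2 * sqrt 3).

Definition Aseries_partial (alpha : nat -> nat -> R) (N : nat) (tau sigma : R) : R :=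
  rsum (S N) (fun i => rsum (S N) (fun j =>
    if (Nat.even (i + j) && Nat.ltb 1 (i + j))%bool
    then alpha i j * Leg i tau * Leg j sigma else 0)).

Definition series_unif_conv (alpha : nat -> nat -> R) (Ssum : R -> R -> R) : Prop :=
  forall eps : R, 0 < eps ->
  exists N0 : nat, forall N : nat, (N0 <= N)%nat ->
  forall tau sigma : R, 0 <= tau <= 1 -> 0 <= sigma <= 1 ->
  Rabs (Aseries_partial alpha N tau sigma - Ssum tau sigma) < eps.

Definition Abar (alpha : nat -> nat -> R) (Ssum : R -> R -> R) (tau sigma : R) : R :=
  alpha O O - / 2 * xi1 * Leg 1 sigma + / 2 * xi1 * Leg 1 tau + Ssum tau sigma.

Definition vec (d : nat) := Fin.t d -> R.

(* One step of the s-stage RKN method (stages indexed 0..s-1), as a relation: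
   from (t0, q0, q'0) with step h the method can produce (q1, q'1). *)
Definition RKN_step (s d : nat) (abar : nat -> nat -> R) (bbar b c : nat -> R)
  (f : R -> vec d -> vec d) (h t0 : R) (q0 p0 q1 p1 : vec d) : Prop :=
  exists Q : nat -> vec d,
    (forall i, (i < s)%nat -> forall k,
       Q i k = q0 k + h * c i * p0 k
               + h ^ 2 * rsum s (fun j => abar i j * f (t0 + c j * h) (Q j) k)) /\
    (forall k, q1 k = q0 k + h * p0 k
               + h ^ 2 * rsum s (fun i => bbar i * f (t0 + c i * h) (Q i) k)) /\
    (forall k, p1 k = p0 k + h * rsum s (fun i => b i * f (t0 + c i * h) (Q i) k)).

(* Symmetry Phi_h = Phi_{-h}^{-1}: a step of size h from (t0,y0) to y1 is exactly
   a step of size -h from (t0+h,y1) back to y0, for every ODE q'' = f(t,q). *)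
Definition RKN_symmetric (s : nat) (abar : nat -> nat -> R) (bbar b c : nat -> R) : Prop :=
  forall (d : nat) (f : R -> vec d -> vec d) (h t0 : R) (q0 p0 q1 p1 : vec d),
    RKN_step s d abar bbar b c f h t0 q0 p0 q1 p1 <->
    RKN_step s d abar bbar b c f (- h) (t0 + h) q1 p1 q0 p0.

(* Reflecting every stage (i -> s+1-i, c_i -> 1 - c_i) turns a step of size h
   into a step of size -h started from the end point, provided the coefficients
   satisfy the reflection relations b_{s+1-i} = b_i, bbar_{s+1-i} = b_i - bbar_i and
   abar_{s+1-i,j} = bbar_j - c_i b_j + abar_{i,s+1-j}.  For abar_{ij} = b_j A(c_i,c_j)
   the last one reduces to A(1-x, y) = 1 - x - y + A(x, 1-y).  The linear part of A
   satisfies it because xi_1 P_1(x)/2 = (2x-1)/4, and every term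
   P_i(tau) P_j(sigma) with i+j even is unchanged by (tau, sigma) -> (1-tau, 1-sigma)
   since P_k(1-x) = (-1)^k P_k(x); the latter follows from the Rodrigues formula, as
   x^2 - x is invariant under x -> 1-x and each derivative flips the parity. *)
From Stdlib Require Import Reals Lra Lia List FunctionalExtensionality.
Import ListNotations.
Open Scope R_scope.

Lemma rsum_ext n g g' :
  (forall i, (i < n)%nat -> g i = g' i) -> rsum n g = rsum n g'.
Proof.
  induction n as [|n IH]; intros H; simpl; [reflexivity|].
  rewrite IH, H by (try intros; try apply H; lia). reflexivity.
Qed.

Lemma rsum_add n u v : rsum n (fun j => u j + v j) = rsum n u + rsum n v.
Proof. induction n; simpl; [ring | rewrite IHn; ring]. Qed.

Lemma rsum_sub n u v : rsum n (fun j => u j - v j) = rsum n u - rsum n v.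
Proof. induction n; simpl; [ring | rewrite IHn; ring]. Qed.

Lemma rsum_scal n a u : rsum n (fun j => a * u j) = a * rsum n u.
Proof. induction n; simpl; [ring | rewrite IHn; ring]. Qed.

Lemma rsum_shift n g : rsum (S n) g = g 0%nat + rsum n (fun j => g (S j)).
Proof.
  induction n as [|n IH]; [simpl; ring|].
  change (rsum (S (S n)) g) with (rsum (S n) g + g (S n)).
  rewrite IH. simpl. ring.
Qed.

Lemma rsum_rev n g : rsum n (fun j => g (n - 1 - j)%nat) = rsum n g.
Proof.
  revert g; induction n as [|n IH]; intros g; [reflexivity|].
  change (rsum (S n) (fun j => g (S n - 1 - j)%nat))
    with (rsum n (fun j => g (S n - 1 - j)%nat) + g (S n - 1 - n)%nat).
  rewrite (rsum_ext n _ (fun j => g (S (n - 1 - j)))) by (intros; f_equal; lia).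
  rewrite (IH (fun m => g (S m))), rsum_shift.
  replace (S n - 1 - n)%nat with 0%nat by lia. ring.
Qed.

Lemma peval_cons a p x : peval (a :: p) x = a + x * peval p x.
Proof. reflexivity. Qed.

Lemma peval_padd p q x : peval (padd p q) x = peval p x + peval q x.
Proof.
  revert q; induction p as [|a p IH]; intros [|b q]; simpl; try ring.
  fold (peval p x) (peval q x) (peval (padd p q) x). rewrite IH. ring.
Qed.

Lemma peval_pscale a p x : peval (pscale a p) x = a * peval p x.
Proof.
  induction p as [|b p IH]; simpl; [ring|].
  fold (peval p x). change (fold_right _ 0 (map (Rmult a) p)) with (peval (pscale a p) x).
  rewrite IH. ring.
Qed.

Lemma peval_pmul p q x : peval (pmul p q) x = peval p x * peval q x.
Proof.
  induction p as [|a p IH]; [simpl; ring|].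
  cbn [pmul]. rewrite peval_padd, peval_pscale, !peval_cons, IH. ring.
Qed.

Lemma peval_ppow p k x : peval (ppow p k) x = peval p x ^ k.
Proof.
  induction k as [|k IH]; [simpl; ring|].
  change (ppow p (S k)) with (pmul p (ppow p k)).
  rewrite peval_pmul, IH. reflexivity.
Qed.

Lemma peval_pderiv_aux_S p n x :
  peval (pderiv_aux (S n) p) x = peval (pderiv_aux n p) x + peval p x.
Proof.
  revert n; induction p as [|a p IH]; intros n; [simpl; ring|].
  cbn [pderiv_aux]. rewrite !peval_cons, IH, S_INR. ring.
Qed.

Lemma peval_pderiv_cons a p x :
  peval (pderiv (a :: p)) x = peval p x + x * peval (pderiv p) x.
Proof.
  destruct p as [|b p]; [simpl; ring|].
  cbn [pderiv pderiv_aux]. rewrite !peval_cons, (peval_pderiv_aux_S p 1). simpl INR. ring.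
Qed.

Lemma pderiv_correct p x : derivable_pt_lim (peval p) x (peval (pderiv p) x).
Proof.
  revert x; induction p as [|a p IH]; intros x.
  - apply derivable_pt_lim_const.
  - rewrite peval_pderiv_cons.
    change (peval (a :: p)) with (fun y => a + y * peval p y).
    replace (peval p x + x * peval (pderiv p) x)
      with (0 + (1 * peval p x + x * peval (pderiv p) x)) by ring.
    apply (derivable_pt_lim_plus (fun _ => a) (fun y => y * peval p y)).
    + apply derivable_pt_lim_const.
    + apply (derivable_pt_lim_mult id (peval p)); [apply derivable_pt_lim_id | apply IH].
Qed.

Lemma pderiv_reflect p e :
  (forall x, peval p (1 - x) = e * peval p x) ->
  forall x, peval (pderiv p) (1 - x) = - e * peval (pderiv p) x.
Proof.
  intros Hp x.
  assert (Hlhs : derivable_pt_lim (fun y => peval p (1 - y)) x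
                   (peval (pderiv p) (1 - x) * (0 - 1))).
  { apply (derivable_pt_lim_comp (fun y => 1 - y) (peval p)).
    - apply (derivable_pt_lim_minus (fun _ => 1) id);
        [apply derivable_pt_lim_const | apply derivable_pt_lim_id].
    - apply pderiv_correct. }
  assert (Hrhs : derivable_pt_lim (fun y => peval p (1 - y)) x
                   (e * peval (pderiv p) x)).
  { replace (fun y => peval p (1 - y)) with (mult_real_fct e (peval p))
      by (extensionality y; symmetry; apply Hp).
    apply derivable_pt_lim_scal, pderiv_correct. }
  pose proof (uniqueness_limite _ _ _ _ Hlhs Hrhs). lra.
Qed.

Lemma iter_pderiv_reflect p e :
  (forall x, peval p (1 - x) = e * peval p x) ->
  forall n x, peval (Nat.iter n pderiv p) (1 - x) = (-1) ^ n * e * peval (Nat.iter n pderiv p) x.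
Proof.
  intros Hp n. induction n as [|n IH]; intros x.
  - simpl. rewrite Hp. ring.
  - change (Nat.iter (S n) pderiv p) with (pderiv (Nat.iter n pderiv p)).
    rewrite (pderiv_reflect _ _ IH). simpl. ring.
Qed.

Lemma Leg_reflect k x : Leg k (1 - x) = (-1) ^ k * Leg k x.
Proof.
  assert (Hsym : forall y, peval (ppow [0; -1; 1] k) (1 - y) = 1 * peval (ppow [0; -1; 1] k) y).
  { intros y. rewrite !peval_ppow, Rmult_1_l. f_equal. simpl. ring. }
  unfold Leg. rewrite (iter_pderiv_reflect _ _ Hsym). ring.
Qed.

Lemma Leg_1 x : Leg 1 x = sqrt 3 * (2 * x - 1).
Proof. unfold Leg. simpl. replace (2 * 1 + 1) with 3 by ring. field. Qed.

Lemma pow_m1_even i j : Nat.even (i + j) = true -> (-1) ^ i = (-1) ^ j.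
Proof.
  intros Heven. apply Nat.even_spec in Heven as [m Hm].
  assert (Hij : (-1) ^ i * (-1) ^ j = 1) by (rewrite <- pow_add, Hm; apply pow_1_even).
  assert (Hjj : (-1) ^ j * (-1) ^ j = 1)
    by (rewrite <- pow_add; replace (j + j)%nat with (2 * j)%nat by lia; apply pow_1_even).
  transitivity ((-1) ^ i * ((-1) ^ j * (-1) ^ j)); [rewrite Hjj; ring|].
  rewrite <- Rmult_assoc, Hij. ring.
Qed.

Lemma Aseries_partial_reflect alpha N x y :
  Aseries_partial alpha N (1 - x) y = Aseries_partial alpha N x (1 - y).
Proof.
  unfold Aseries_partial.
  apply rsum_ext; intros i _; apply rsum_ext; intros j _.
  destruct (Nat.even (i + j)) eqn:Heven; [|reflexivity].
  destruct (Nat.ltb 1 (i + j)); [|reflexivity].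
  simpl. rewrite !Leg_reflect, (pow_m1_even i j Heven). ring.
Qed.

Lemma series_unif_conv_Un_cv alpha Ssum tau sigma :
  series_unif_conv alpha Ssum -> 0 <= tau <= 1 -> 0 <= sigma <= 1 ->
  Un_cv (fun N => Aseries_partial alpha N tau sigma) (Ssum tau sigma).
Proof.
  intros Hconv Htau Hsigma eps Heps.
  destruct (Hconv eps Heps) as [N0 HN0].
  exists N0. intros N HN. apply (HN0 N HN tau sigma Htau Hsigma).
Qed.

Lemma Ssum_reflect alpha Ssum x y :
  series_unif_conv alpha Ssum -> 0 <= x <= 1 -> 0 <= y <= 1 ->
  Ssum (1 - x) y = Ssum x (1 - y).
Proof.
  intros Hconv Hx Hy.
  apply (UL_sequence (fun N => Aseries_partial alpha N x (1 - y))).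
  - apply (Un_cv_ext (fun N => Aseries_partial alpha N (1 - x) y)).
    + intros N. apply Aseries_partial_reflect.
    + apply series_unif_conv_Un_cv; auto; lra.
  - apply series_unif_conv_Un_cv; auto; lra.
Qed.

Lemma Abar_reflect alpha Ssum x y :
  series_unif_conv alpha Ssum -> 0 <= x <= 1 -> 0 <= y <= 1 ->
  Abar alpha Ssum (1 - x) y = 1 - y - x + Abar alpha Ssum x (1 - y).
Proof.
  intros Hconv Hx Hy. unfold Abar, xi1.
  rewrite (Ssum_reflect alpha Ssum x y Hconv Hx Hy), !Leg_1.
  assert (sqrt 3 > 0) by (apply sqrt_lt_R0; lra).
  field. lra.
Qed.

Section RKN_reflection.

Variables (s : nat) (abar : nat -> nat -> R) (bbar b c : nat -> R).

Hypothesis b_reflect : forall i, (i < s)%nat -> b (s - 1 - i)%nat = b i.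
Hypothesis c_reflect : forall i, (i < s)%nat -> c (s - 1 - i)%nat = 1 - c i.
Hypothesis bbar_reflect : forall i, (i < s)%nat -> bbar (s - 1 - i)%nat = b i - bbar i.
Hypothesis abar_reflect : forall i j, (i < s)%nat -> (j < s)%nat ->
  abar (s - 1 - i)%nat j = bbar j - c i * b j + abar i (s - 1 - j)%nat.

Lemma rsum_reflect_stages d (f : R -> vec d -> vec d) (Q : nat -> vec d) h t0
  (u : nat -> R) k :
  rsum s (fun j => u j * f (t0 + h + c j * - h) (Q (s - 1 - j)%nat) k)
  = rsum s (fun j => u (s - 1 - j)%nat * f (t0 + c j * h) (Q j) k).
Proof.
  rewrite <- (rsum_rev s (fun j => u (s - 1 - j)%nat * f (t0 + c j * h) (Q j) k)).
  apply rsum_ext; intros j Hj.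
  replace (s - 1 - (s - 1 - j))%nat with j by lia.
  rewrite (c_reflect j Hj).
  replace (t0 + h + c j * - h) with (t0 + (1 - c j) * h) by ring. reflexivity.
Qed.

Lemma RKN_step_reverse d f h t0 q0 p0 q1 p1 :
  RKN_step s d abar bbar b c f h t0 q0 p0 q1 p1 ->
  RKN_step s d abar bbar b c f (- h) (t0 + h) q1 p1 q0 p0.
Proof.
  intros [Q [HQ [Hq Hp]]].
  exists (fun i => Q (s - 1 - i)%nat).
  set (F := fun j k => f (t0 + c j * h) (Q j) k).
  split; [|split].
  - intros i Hi k. rewrite rsum_reflect_stages; fold F.
    rewrite (HQ (s - 1 - i)%nat ltac:(lia) k), Hq, Hp, (c_reflect i Hi).
    rewrite (rsum_ext s _ (fun j => bbar j * F j k - c i * (b j * F j k)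
                                    + abar i (s - 1 - j)%nat * F j k))
      by (intros j Hj; rewrite (abar_reflect i j Hi Hj); unfold F; ring).
    rewrite rsum_add, rsum_sub, rsum_scal. unfold F. ring.
  - intros k. rewrite rsum_reflect_stages; fold F.
    rewrite (rsum_ext s _ (fun j => b j * F j k - bbar j * F j k))
      by (intros j Hj; rewrite (bbar_reflect j Hj); unfold F; ring).
    rewrite rsum_sub, Hq, Hp. unfold F. ring.
  - intros k. rewrite rsum_reflect_stages; fold F.
    rewrite (rsum_ext s _ (fun j => b j * F j k))
      by (intros j Hj; rewrite (b_reflect j Hj); unfold F; reflexivity).
    rewrite Hp. unfold F. ring.
Qed.

Lemma RKN_symmetric_of_reflect : RKN_symmetric s abar bbar b c.
Proof.
  intros d f h t0 q0 p0 q1 p1. split; [apply RKN_step_reverse|].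
  intros Hstep. apply RKN_step_reverse in Hstep.
  rewrite Ropp_involutive in Hstep.
  replace (t0 + h + - h) with t0 in Hstep by ring. exact Hstep.
Qed.

End RKN_reflection.

Theorem corollary4p2 (s : nat) (b c : nat -> R) (alpha : nat -> nat -> R)
  (Ssum : R -> R -> R)
  (Hconv : series_unif_conv alpha Ssum)
  (Hc : forall i, (i < s)%nat -> 0 <= c i <= 1)
  (Hb : forall i, (i < s)%nat -> b (s - 1 - i)%nat = b i)
  (Hcs : forall i, (i < s)%nat -> c (s - 1 - i)%nat = 1 - c i) :
  RKN_symmetric s (fun i j => b j * Abar alpha Ssum (c i) (c j))
                  (fun i => b i * (1 - c i)) b c.
Proof.
  apply RKN_symmetric_of_reflect; auto.
  - intros i Hi. rewrite (Hb i Hi), (Hcs i Hi). ring.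
  - intros i j Hi Hj. rewrite (Hcs i Hi), (Hcs j Hj), (Hb j Hj).
    rewrite (Abar_reflect alpha Ssum (c i) (c j) Hconv (Hc i Hi) (Hc j Hj)). ring.
Qed.
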